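(* Let $H=(V,E)$ be a downward-closed hypergraph (for every $e\in E$ and every $e'\subseteq e$ with $|e'|>1$, $e'\in E$), and let $F$ be a facet of $\mathrm{MP}^H$. Define $V_1^F=\{I\in V: \forall z\in\mathrm{MP}^H,\ z_I=1 \text{ implies } z\in F\}$, and for $U\subseteq V$ define $E_U=\{e\in L(V)\cup E\cup\{\varnothing\}: e\subseteq V\setminus U,\ e\cup U\in L(V)\cup E\}$ and $F_U=\{z\in F: z_I=0\ \forall I\in U\}$. If $U\subseteq V\setminus V_1^F$ is nonempty, then either $E_U$ is empty, or the projection $\operatorname{proj}_{E_U\setminus\{\varnothing\}}F_U$ is full-dimensional in $\mathbb{R}^{E_U\setminus\{\varnothing\}}$.
   Context: A hypergraph $H=(V,E)$ here has a finite vertex set $V$ and hyperedge set $E$ consisting of subsets $e\subseteq V$ with $|e|\ge 2$. Write $L(V)=\{\{I\}: I\in V\}$. The multilinear set is $\mathcal{S}^H=\{z\in\{0,1\}^{L(V)\cup E}: z_e=\prod_{I\in e}z_I\ \forall e\in E\}$, where $z_I=z_{\{I\}}$, and the multilinear polytope is $\mathrm{MP}^H=\operatorname{conv}\mathcal{S}^H$. $\operatorname{proj}_{S'}$ extracts the coordinates indexed by $S'$. *)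

From mathcomp Require Import all_boot all_order all_algebra.
Set Implicit Arguments. Unset Strict Implicit. Unset Printing Implicit Defensive.
Import Order.TTheory GRing.Theory Num.Theory.
Local Open Scope ring_scope.

Section Defs.
Variables (R : realFieldType) (V : finType).

(* Ambient vectors: real functions on subsets of V; coordinates outside
   the relevant index set are required to be 0 where relevant. *)
Local Notation vec := {ffun {set V} -> R}.

Definition hypergraph (E : {set {set V}}) : Prop :=
  forall e, e \in E -> (2 <= #|e|)%N.

Definition downward_closed (E : {set {set V}}) : Prop :=
  forall e e' : {set V}, e \in E -> e' \subset e -> (1 < #|e'|)%N -> e' \in E.

Definition LV : {set {set V}} := [set [set i] | i : V].

Definition coords (E : {set {set V}}) : {set {set V}} := LV :|: E.

(* the multilinear set S^H, embedded in vec (zero outside L(V) u E) *)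
Definition mlset (E : {set {set V}}) (z : vec) : Prop :=
  [/\ forall e, e \notin coords E -> z e = 0,
      forall i : V, z [set i] = 0 \/ z [set i] = 1 &
      forall e, e \in E -> z e = \prod_(i in e) z [set i]].

Definition scv (c : R) (v : vec) : vec := [ffun e => c * v e].

Definition conv (S : vec -> Prop) (z : vec) : Prop :=
  exists (n : nat) (lam : 'I_n -> R) (p : 'I_n -> vec),
    [/\ forall k, 0 <= lam k, \sum_k lam k = 1, forall k, S (p k) &
        z = \sum_k scv (lam k) (p k)].

Definition MP (E : {set {set V}}) : vec -> Prop := conv (mlset E).

Definition dotv (a z : vec) : R := \sum_e a e * z e.

Definition is_face (P F : vec -> Prop) : Prop :=
  exists (a : vec) (b : R),
    (forall z, P z -> dotv a z <= b) /\
    (forall z, F z <-> P z /\ dotv a z = b).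

Definition lin_indep (k : nat) (w : 'I_k -> vec) : Prop :=
  forall c : 'I_k -> R, \sum_i scv (c i) (w i) = 0 -> forall i, c i = 0.

Definition affdim_ge (S : vec -> Prop) (k : nat) : Prop :=
  exists p : 'I_k.+1 -> vec,
    (forall i, S (p i)) /\ lin_indep (fun i : 'I_k => p (lift ord0 i) - p ord0).

(* S has (affine) dimension d (d = -1 for the empty set) *)
Definition dim_eq (S : vec -> Prop) (d : int) : Prop :=
  forall k : nat, affdim_ge S k <-> (k%:Z <= d).

Definition is_facet (P F : vec -> Prop) : Prop :=
  is_face P F /\ exists d : int, dim_eq P d /\ dim_eq F (d - 1).

Definition V1 (E : {set {set V}}) (F : vec -> Prop) (I : V) : Prop :=
  forall z, MP E z -> z [set I] = 1 -> F z.

Definition EU (E : {set {set V}}) (U : {set V}) : {set {set V}} :=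
  [set e | ((e \in coords E) || (e == set0)) && [disjoint e & U]
           && ((e :|: U) \in coords E)].

Definition FU (F : vec -> Prop) (U : {set V}) (z : vec) : Prop :=
  F z /\ forall I, I \in U -> z [set I] = 0.

Definition projv (D : {set {set V}}) (z : vec) : vec :=
  [ffun e => if e \in D then z e else 0].

Definition image_proj (D : {set {set V}}) (S : vec -> Prop) (y : vec) : Prop :=
  exists z, S z /\ y = projv D z.

(* S is full-dimensional in R^D: S lives in R^D and has dimension |D| *)
Definition fulldim_in (D : {set {set V}}) (S : vec -> Prop) : Prop :=
  (forall y, S y -> forall e, e \notin D -> y e = 0) /\ dim_eq S #|D|%:Z.

End Defs.

From Pilot Require Import Defs.
From mathcomp Require Import all_boot all_order all_algebra.
From Stdlib Require Import Classical_Prop.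
Import Order.TTheory GRing.Theory Num.Theory.
Local Open Scope ring_scope.
Set Implicit Arguments. Unset Strict Implicit. Unset Printing Implicit Defensive.

(* Suppose the projection of F_U onto E_U \ {∅} satisfied a nontrivial affine
   equation c.y + c0 = 0.  Read it as the multilinear polynomial
   p = c0 + Σ_{e ∈ E_U \ {∅}} c_e x^e and put q = Π_{u ∈ U} (1 - x_u) p.  Every
   monomial of q has the form x^(e ∪ W) with W ⊆ U, so by downward closedness it
   is a coordinate of MP^H, and q is an affine function on MP^H.  It vanishes at
   the vertices of F: through the factor at those meeting U, through the equation
   at the others, which lie in F_U.  As some u ∈ U is not in V_1^F, q also vanishes
   at a vertex outside F with x_u = 1.  A facet and one point off it affinely span
   the polytope, so q vanishes at every vertex; at the vertices disjoint from U it
   agrees with p, and a multilinear polynomial vanishing at all 0/1 points of its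
   support is zero.  Hence c0 = 0 and c vanishes on E_U \ {∅}. *)

Section AffineDimension.
Variables (R : realFieldType) (V : finType).
Local Notation vec := {ffun {set V} -> R}.

Definition aff_vanish (S : vec -> Prop) (c : vec) (c0 : R) : Prop :=
  forall y, S y -> dotv c y + c0 = 0.

Lemma dotvD (a u v : vec) : dotv a (u + v) = dotv a u + dotv a v.
Proof. by rewrite /dotv -big_split; apply: eq_bigr => e _; rewrite ffunE mulrDr. Qed.

Lemma dotvN (a u : vec) : dotv a (- u) = - dotv a u.
Proof. by rewrite /dotv -sumrN; apply: eq_bigr => e _; rewrite ffunE mulrN. Qed.

Lemma dotvB (a u v : vec) : dotv a (u - v) = dotv a u - dotv a v.
Proof. by rewrite dotvD dotvN. Qed.

Lemma dotv0 (a : vec) : dotv a 0 = 0.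
Proof. by rewrite /dotv big1 // => e _; rewrite ffunE mulr0. Qed.

Lemma dotvZ (a : vec) c u : dotv a (scv c u) = c * dotv a u.
Proof. by rewrite /dotv mulr_sumr; apply: eq_bigr => e _; rewrite ffunE mulrCA. Qed.

Lemma dotv_sum (a : vec) n (c : 'I_n -> R) (w : 'I_n -> vec) :
  dotv a (\sum_i scv (c i) (w i)) = \sum_i c i * dotv a (w i).
Proof.
elim/big_ind2: _ => [|x1 x2 y1 y2 <- <-|i _]; by rewrite ?dotv0 ?dotvD ?dotvZ.
Qed.

Definition deltav (e0 : {set V}) : vec := [ffun e => (e == e0)%:R].

Lemma dotv_deltav e0 (v : vec) : dotv (deltav e0) v = v e0.
Proof.
rewrite /dotv (bigD1 e0) //= big1 ?addr0 => [|e /negbTE ne]; rewrite ffunE.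
  by rewrite eqxx mul1r.
by rewrite ne mul0r.
Qed.

Lemma mulmx_eq0_nontrivial m n (A : 'M[R]_(m, n)) :
  (n < m)%N -> exists2 u : 'rV_m, u != 0 & u *m A = 0.
Proof.
move=> lt_nm; have /rowV0Pn[u] : kermx A != 0.
  by rewrite kermx_eq0 /row_free neq_ltn (leq_ltn_trans (rank_leq_col A) lt_nm).
by rewrite sub_kermx => /eqP uA u0; exists u.
Qed.

Lemma orthogonal_exists (D : {set {set V}}) k (w : 'I_k -> vec) : (k < #|D|)%N ->
  exists2 c : vec, (exists2 e, e \in D & c e != 0) & forall i, dotv c (w i) = 0.
Proof.
move=> lt_kD; have [e0 De0] : exists e0, e0 \in D.
  by apply/card_gt0P; apply: leq_ltn_trans lt_kD.
pose A : 'M[R]_(#|D|, k) := \matrix_(j, i) w i (enum_val j).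
have [u /matrix0Pn[i [j uj]] uA] := mulmx_eq0_nontrivial A lt_kD.
exists [ffun e => if e \in D then u 0 (enum_rank_in De0 e) else 0].
  by exists (enum_val j); rewrite ?enum_valP // ffunE enum_valP enum_valK_in -(ord1 i).
move=> i'; move/matrixP/(_ 0 i'): uA; rewrite !mxE => uAi; rewrite -[RHS]uAi.
rewrite /dotv (bigID (mem D)) /= [X in _ + X]big1 ?addr0 => [|e /negbTE eD]; last first.
  by rewrite ffunE eD mul0r.
rewrite big_enum_val; apply: eq_bigr => j' _.
by rewrite ffunE enum_valP enum_valK_in mxE.
Qed.

Lemma lin_indep_card (D : {set {set V}}) k (w : 'I_k -> vec) :
  lin_indep w -> (forall i e, e \notin D -> w i e = 0) -> (k <= #|D|)%N.
Proof.
move=> indw suppw; rewrite leqNgt; apply/negP => lt_Dk.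
pose B : 'M[R]_(k, #|D|) := \matrix_(i, j) w i (enum_val j).
have [u u0 uB] := mulmx_eq0_nontrivial B lt_Dk.
move/eqP: u0; apply; apply/rowP => i; rewrite mxE; apply: indw i; apply/ffunP => e.
rewrite sum_ffunE ffunE; have [De | /negPf nDe] := boolP (e \in D); last first.
  by apply: big1 => i _; rewrite ffunE suppw ?nDe // mulr0.
move/matrixP/(_ 0 (enum_rank_in De e)): uB; rewrite !mxE => uBe; rewrite -[RHS]uBe.
by apply: eq_bigr => i _; rewrite ffunE mxE enum_rankK_in.
Qed.

Lemma affdim_ge0 (S : vec -> Prop) y : S y -> affdim_ge S 0.
Proof. by move=> Sy; exists (fun _ => y); split => // c _ []. Qed.

Lemma affdim_ge_card (D : {set {set V}}) (S : vec -> Prop) k :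
  (forall y, S y -> forall e, e \notin D -> y e = 0) -> affdim_ge S k -> (k <= #|D|)%N.
Proof.
move=> suppS [p [Sp indp]]; apply: (lin_indep_card indp) => i e De.
by rewrite !ffunE !(suppS _ (Sp _)) // subrr.
Qed.

Lemma affdim_ge_extend (S : vec -> Prop) k (p : 'I_k.+1 -> vec) (L : vec) l z :
  (forall i, S (p i)) -> lin_indep (fun i : 'I_k => p (lift ord0 i) - p ord0) ->
  (forall i, dotv L (p i) = l) -> dotv L z != l -> S z -> affdim_ge S k.+1.
Proof.
move=> Sp indp Lp Lz Sz.
pose q (i : 'I_k.+2) := if (i < k.+1)%N then p (inord i) else z.
have q0 : q ord0 = p ord0 by rewrite /q /=; congr p; apply: val_inj; rewrite /= inordK.
have qmax : q (lift ord0 ord_max) = z by rewrite /q /= ltnn.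
have qlift (i : 'I_k) : q (lift ord0 (widen_ord (leqnSn k) i)) = p (lift ord0 i).
  rewrite /q /= ltnS ltn_ord; congr p; apply: val_inj.
  by rewrite /= inordK // ltnS ltn_ord.
exists q; split => [i|c]; first by rewrite /q; case: ifP.
rewrite big_ord_recr /= qmax q0 => sum0.
have cmax : c ord_max = 0.
  move/(congr1 (dotv L)): sum0; rewrite dotv0 dotvD dotv_sum dotvZ big1 => [|i _].
    rewrite add0r dotvB (Lp ord0) => /eqP.
    by rewrite mulf_eq0 subr_eq0 (negbTE Lz) orbF => /eqP.
  by rewrite qlift dotvB !Lp subrr mulr0.
have cwiden (i : 'I_k) : c (widen_ord (leqnSn k) i) = 0.
  apply: (indp (fun j => c (widen_ord (leqnSn k) j))); rewrite -[RHS]sum0 cmax.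
  have -> : scv 0 (z - p ord0) = 0 by apply/ffunP => e; rewrite !ffunE mul0r.
  by rewrite addr0; apply: eq_bigr => j _; rewrite qlift.
move=> i; have [j ->|->] := unliftP ord_max i; last exact: cmax.
have -> : lift ord_max j = widen_ord (leqnSn k) j by apply: val_inj; exact: lift_max.
exact: cwiden.
Qed.

Lemma affdim_geVaff_vanish (D : {set {set V}}) (S : vec -> Prop) k : (k <= #|D|)%N ->
  affdim_ge S k \/ exists (c : vec) (c0 : R),
    (c0 != 0 \/ exists2 e, e \in D & c e != 0) /\ aff_vanish S c c0.
Proof.
elim: k => [_|k IH lt_kD].
  have [[y Sy]|noS] := classic (exists y, S y); first by left; exact: affdim_ge0 Sy.
  right; exists 0, 1; split; first by left; exact: oner_neq0.
  by move=> y Sy; case: noS; exists y.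
have [[p [Sp indp]]|] := IH (ltnW lt_kD); last by right.
have [c cD c_orth] := orthogonal_exists (fun i : 'I_k => p (lift ord0 i) - p ord0) lt_kD.
have cp i : dotv c (p i) = dotv c (p ord0).
  by have [j ->|->] := unliftP ord0 i; rewrite //; apply/eqP; rewrite -subr_eq0 -dotvB c_orth.
have [[y [Sy cy]]|cS] := classic (exists y, S y /\ dotv c y != dotv c (p ord0)).
  by left; exact: affdim_ge_extend Sp indp cp cy Sy.
right; exists c, (- dotv c (p ord0)); split; first by right.
move=> y Sy; apply/eqP; rewrite subr_eq0; apply: contraT => cy.
by case: cS; exists y.
Qed.

Lemma fulldim_in_aff_vanish (D : {set {set V}}) (S : vec -> Prop) :
  (forall y, S y -> forall e, e \notin D -> y e = 0) ->
  (forall c c0, aff_vanish S c c0 -> c0 = 0 /\ {in D, forall e, c e = 0}) ->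
  fulldim_in D S.
Proof.
move=> suppS trivS; split => // k; rewrite lez_nat; split; first exact: affdim_ge_card.
case/(affdim_geVaff_vanish S) => [//|[c [c0 [c_nz /trivS[c00 cD]]]]].
by case: c_nz => [|[e /cD ->]]; rewrite ?c00 eqxx.
Qed.

Lemma affdim_ge_extend_dim (S T : vec -> Prop) (L : vec) l (n : nat) y :
  dim_eq S (n%:Z - 1) -> (forall x, S x -> T x /\ dotv L x = l) ->
  T y -> dotv L y != l -> affdim_ge T n.
Proof.
move=> dimS ST Ty Ly; case: n dimS => [|m] dimS; first exact: affdim_ge0 Ty.
have [p [Sp indp]] : affdim_ge S m by apply/dimS; rewrite -predn_int.
by apply: (affdim_ge_extend _ indp _ Ly Ty) => i; have [] := ST _ (Sp i).
Qed.

(* A facet and one point off it affinely span the polytope. *)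
Lemma facet_aff_vanish (P F : vec -> Prop) (a : vec) b d (h : vec) h0 y :
  (forall z, F z <-> P z /\ dotv a z = b) -> dim_eq P d -> dim_eq F (d - 1) ->
  P y -> dotv a y != b -> aff_vanish F h h0 -> dotv h y + h0 = 0 -> aff_vanish P h h0.
Proof.
move=> faceF + + Py ay hF hy z Pz.
case: d => n dimP dimF; last by have := (dimP 0%N).1 (affdim_ge0 Py).
apply/eqP; apply: contraT => hz.
pose S1 x := P x /\ dotv h x + h0 = 0.
have [p [S1p indp]] : affdim_ge S1 n.
  apply: (affdim_ge_extend_dim (L := a) (l := b) dimF _ (conj Py hy) ay).
  by move=> x /[dup] /hF hx /faceF[Px ->].
have /dimP : affdim_ge P n.+1.
  apply: (affdim_ge_extend (L := h) (l := - h0) (z := z) _ indp) => // [i|i|].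
  - by have [] := S1p i.
  - by apply/eqP; rewrite -addr_eq0; have [_ ->] := S1p i.
  - by rewrite -addr_eq0.
by rewrite lez_nat ltnn.
Qed.

End AffineDimension.

Section ConvexCombination.
Variables (R : realFieldType) (V : finType).
Local Notation vec := {ffun {set V} -> R}.
Variables (n : nat) (lam : 'I_n -> R) (p : 'I_n -> vec).
Hypothesis lam_sum1 : \sum_k lam k = 1.

Lemma dotv_conv (g : vec) g0 :
  dotv g (\sum_k scv (lam k) (p k)) + g0 = \sum_k lam k * (dotv g (p k) + g0).
Proof.
rewrite dotv_sum -{1}[g0]mul1r -lam_sum1 mulr_suml -big_split.
by apply: eq_bigr => k _; rewrite mulrDr.
Qed.

Lemma conv_aff_eq0 (g : vec) g0 :
  (forall k, lam k != 0 -> dotv g (p k) + g0 = 0) ->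
  dotv g (\sum_k scv (lam k) (p k)) + g0 = 0.
Proof.
move=> gp; rewrite dotv_conv; apply: big1 => k _.
by have [->|/gp ->] := eqVneq (lam k) 0; rewrite ?mul0r ?mulr0.
Qed.

Lemma conv_aff_eq0_support (g : vec) g0 :
  (forall k, 0 <= lam k) -> (forall k, dotv g (p k) + g0 <= 0) ->
  dotv g (\sum_k scv (lam k) (p k)) + g0 = 0 ->
  forall k, lam k != 0 -> dotv g (p k) + g0 = 0.
Proof.
move=> lam_ge0 gp_le0; rewrite dotv_conv => /eqP.
rewrite -oppr_eq0 -sumrN psumr_eq0 => [/allP gp k lamk|k _]; last first.
  by rewrite oppr_ge0 mulr_ge0_le0.
have /= := gp k (mem_index_enum _).
by rewrite oppr_eq0 mulf_eq0 (negbTE lamk) => /eqP.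
Qed.

End ConvexCombination.

Section MultilinearEval.
Variables (R : realFieldType) (V : finType).
Local Notation vec := {ffun {set V} -> R}.

(* The multilinear polynomial with coefficients [h], evaluated at the indicator vector of [X]. *)
Definition mleval (h : vec) (X : {set V}) : R := \sum_(e : {set V} | e \subset X) h e.

(* The coefficients of [(1 - x_u) * h] when no monomial of [h] contains [u];
   [mleval_mul1BX] holds for every [h]. *)
Definition mul1BX (u : V) (h : vec) : vec :=
  [ffun e : {set V} => if u \in e then - h (e :\ u) else h e].

Lemma mleval_mul1BX u h X : mleval (mul1BX u h) X = if u \in X then 0 else mleval h X.
Proof.
rewrite /mleval (bigID (fun e : {set V} => u \in e)) /=.
have [uX|uX] := boolP (u \in X); last first.
  rewrite big1 ?add0r => [|e /andP[eX ue]]; last by rewrite (subsetP eX u ue) in uX.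
  apply: eq_big => [e|e /andP[_ ue]]; last by rewrite ffunE (negbTE ue).
  by case: (boolP (e \subset X)) => //= eX; apply/negP => ue; rewrite (subsetP eX u ue) in uX.
rewrite (reindex_onto (fun e : {set V} => u |: e) (fun e => e :\ u)) /=; last first.
  by move=> e /andP[_ ue]; rewrite setD1K.
rewrite -[X in _ + X]opprK -sumrN; apply/eqP; rewrite subr_eq0; apply/eqP.
apply: eq_big => [e|e /andP[_ /eqP De]].
  rewrite subUset sub1set uX setU11 /= andbT.
  have [ue|ue] := boolP (u \in e); last by rewrite setU1K // eqxx.
  suff -> : ((u |: e) :\ u == e) = false by rewrite !andbF.
  by apply/negbTE; apply: contraL ue => /eqP <-; rewrite setD11.
by rewrite !ffunE setU11 De; case: (boolP (u \in e)) => // ue; rewrite -De setD11 in ue.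
Qed.

Lemma mleval_foldr_mul1BX s h X :
  mleval (foldr mul1BX h s) X = if has (mem X) s then 0 else mleval h X.
Proof. by elim: s => //= u s IH; rewrite mleval_mul1BX IH; case: (u \in X). Qed.

Lemma mleval_eq0 (P : pred {set V}) (h : vec) :
  (forall e, ~~ P e -> h e = 0) -> (forall X, P X -> mleval h X = 0) -> h = 0.
Proof.
move=> hP hX; apply/ffunP => e; rewrite ffunE.
elim: {e}_.+1 {-2}e (ltnSn #|e|) => // n IH e; rewrite ltnS => le_en.
have [Pe|/hP //] := boolP (P e).
have := hX e Pe; rewrite /mleval (bigD1 e) //= big1 ?addr0 // => e' /andP[e'e ne'].
by apply: IH; apply: leq_trans le_en; apply: proper_card; rewrite properEneq ne' e'e.
Qed.

End MultilinearEval.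

Section MultilinearPolytope.
Variables (R : realFieldType) (V : finType) (E : {set {set V}}).
Local Notation vec := {ffun {set V} -> R}.
Local Notation C := (coords E).
Hypothesis hypE : hypergraph E.
Hypothesis downE : downward_closed E.

Lemma set0_notin_coords : set0 \notin C.
Proof.
rewrite in_setU negb_or; apply/andP; split.
  by apply/imsetP => -[i _ /eqP]; rewrite eq_sym -cards_eq0 cards1.
by apply/negP => /hypE; rewrite cards0.
Qed.

Lemma set1_coords (i : V) : [set i] \in C.
Proof. by rewrite in_setU imset_f. Qed.

Lemma coordsS (e e' : {set V}) : e \in C -> e' \subset e -> e' != set0 -> e' \in C.
Proof.
move=> eC e'e e'0; have : (0 < #|e'|)%N by rewrite card_gt0.
rewrite leq_eqVlt => /orP[/eqP/esym/eqP/cards1P[i ->]|gt1]; first exact: set1_coords.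
move: eC; rewrite in_setU => /orP[/imsetP[i _ ei]|eE].
  by move: (subset_leq_card e'e); rewrite ei cards1 => /(leq_trans gt1).
by rewrite in_setU (downE eE e'e gt1) orbT.
Qed.

Definition vert (X : {set V}) : vec := [ffun e => ((e \in C) && (e \subset X))%:R].

Lemma prod_mem_subset (e X : {set V}) : \prod_(i in e) (i \in X)%:R = (e \subset X)%:R :> R.
Proof.
have [eX|/subsetPn[i ie iX]] := boolP (e \subset X).
  by apply: big1 => i ie; rewrite (subsetP eX i ie).
by rewrite (bigD1 i) //= (negbTE iX) mul0r.
Qed.

Lemma vert1 X i : vert X [set i] = (i \in X)%:R.
Proof. by rewrite ffunE set1_coords sub1set. Qed.

Lemma vert_mlset X : mlset E (vert X).
Proof.
split=> [e /negbTE eC|i|e eE]; rewrite ?vert1 ?ffunE.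
- by rewrite eC.
- by case: (i \in X); [right|left].
rewrite in_setU eE orbT -prod_mem_subset.
by apply: eq_bigr => i _; rewrite vert1.
Qed.

Lemma mlset_vert z : mlset E z -> z = vert [set i | z [set i] == 1].
Proof.
case=> z0 z01 zE.
have z1 i : z [set i] = (i \in [set i | z [set i] == 1])%:R.
  by rewrite inE; case: (z01 i) => ->; rewrite ?eqxx // eq_sym oner_eq0.
apply/ffunP => e; rewrite ffunE; have [eC|/z0 //] := boolP (e \in C).
move: (eC); rewrite in_setU => /orP[/imsetP[i _ ->]|eE]; first by rewrite sub1set z1.
by rewrite zE // -prod_mem_subset; apply: eq_bigr => i _; rewrite z1.
Qed.

Lemma MP_vert X : MP E (vert X).
Proof.
exists 1%N, (fun _ => 1), (fun _ => vert X); split => //; first by rewrite big_ord1.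
  by move=> _; exact: vert_mlset.
by rewrite big_ord1; apply/ffunP => e; rewrite !ffunE mul1r.
Qed.

Lemma MP_conv_vert z : MP E z -> exists n (lam : 'I_n -> R) (X : 'I_n -> {set V}),
  [/\ forall k, 0 <= lam k, \sum_k lam k = 1 & z = \sum_k scv (lam k) (vert (X k))].
Proof.
case=> n [lam [p [lam_ge0 lam_sum1 p_ml ->]]].
exists n, lam, (fun k => [set i | p k [set i] == 1]); split => //.
by apply: eq_bigr => k _; rewrite -mlset_vert.
Qed.

Lemma mleval_vert (h : vec) X : (forall e, e != set0 -> e \notin C -> h e = 0) ->
  mleval h X = dotv h (vert X) + h set0.
Proof.
move=> h_supp; rewrite /mleval (bigD1 set0) ?sub0set //= addrC; congr (_ + _).
rewrite /dotv big_mkcond; apply: eq_bigr => e _; rewrite ffunE.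
have [->|e0] := eqVneq e set0; first by rewrite (negbTE set0_notin_coords) andbF mulr0.
rewrite andbT; have [eC|eC] := boolP (e \in C); last by rewrite h_supp // mul0r; case: ifP.
by case: (e \subset X); rewrite ?mulr1 ?mulr0.
Qed.

Section Face.
Variables (F : vec -> Prop) (a : vec) (b : R).
Hypothesis faceF : forall z, F z <-> MP E z /\ dotv a z = b.

Lemma face_aff_vanish_vert (h : vec) h0 : (forall z, MP E z -> dotv a z <= b) ->
  (forall X, F (vert X) -> dotv h (vert X) + h0 = 0) -> aff_vanish F h h0.
Proof.
move=> valid hF z /faceF[/MP_conv_vert[n [lam [X [lam_ge0 lam_sum1 ->]]]] az].
apply: conv_aff_eq0 => // k lamk; apply: hF; apply/faceF; split; first exact: MP_vert.
apply/eqP; rewrite -subr_eq0; apply/eqP.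
apply: (conv_aff_eq0_support (p := vert \o X) lam_sum1 lam_ge0 _ _ lamk) => [j|].
  by rewrite subr_le0; apply/valid/MP_vert.
by rewrite az subrr.
Qed.

Lemma V1_vert u : (forall X : {set V}, u \in X -> dotv a (vert X) = b) -> V1 E F u.
Proof.
move=> aX z MPz zu; apply/faceF; split => //.
have [n [lam [X [lam_ge0 lam_sum1 zE]]]] := MP_conv_vert MPz.
have uX k (lamk : lam k != 0) : u \in X k.
  have le0 j : dotv (deltav R [set u]) (vert (X j)) - 1 <= 0.
    by rewrite dotv_deltav vert1 subr_le0 lern1 leq_b1.
  have := conv_aff_eq0_support (p := vert \o X) lam_sum1 lam_ge0 le0 _ lamk.
  rewrite /= !dotv_deltav -zE zu subrr vert1 => /(_ erefl).
  by case: (u \in X k) => // /eqP; rewrite sub0r oppr_eq0 oner_eq0.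
apply/eqP; rewrite -subr_eq0; apply/eqP; rewrite zE.
by apply: conv_aff_eq0 => // k /uX/aX ->; rewrite subrr.
Qed.

End Face.

Lemma EU_disjoint U e : e \in EU E U -> [disjoint e & U].
Proof. by rewrite inE => /andP[/andP[_ ->]]. Qed.

Lemma EU_coords U e : e \in EU E U -> U != set0 -> U \in C.
Proof. by rewrite inE => /andP[_ eUC] U0; exact: coordsS eUC (subsetUr e U) U0. Qed.

Lemma setD_EU_coords U e : e :\: U \in EU E U -> e != set0 -> e \in C.
Proof.
rewrite inE => /andP[_ eUC]; apply: coordsS eUC _.
by rewrite setUC -subDset.
Qed.

Section Lift.
Variable U : {set V}.
Hypothesis UC : U \in C.
Local Notation D := (EU E U :\ set0).

(* Coefficients of the polynomial [c0 + \sum_(e in D) c e * x^e]. *)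
Definition affc (c : vec) (c0 : R) : vec :=
  [ffun e => if e == set0 then c0 else if e \in D then c e else 0].

(* Coefficients of [\prod_(u in U) (1 - x_u) * (c0 + \sum_(e in D) c e * x^e)]. *)
Definition liftc (c : vec) (c0 : R) : vec := foldr (@mul1BX R V) (affc c c0) (enum U).

Lemma affc_EU c c0 e : affc c c0 e != 0 -> e \in EU E U.
Proof.
rewrite ffunE; have [-> _|_] := eqVneq e set0.
  by rewrite inE eqxx orbT set0U UC -setI_eq0 set0I eqxx.
by case: ifP => [/setD1P[_ //]|_]; rewrite eqxx.
Qed.

Lemma mleval_affc c c0 X : mleval (affc c c0) X = dotv c (Defs.projv D (vert X)) + c0.
Proof.
rewrite /mleval (bigD1 set0) ?sub0set //= addrC ffunE eqxx; congr (_ + _).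
rewrite /dotv big_mkcond; apply: eq_bigr => e _; rewrite !ffunE.
have [->|e0] /= := eqVneq e set0; first by rewrite andbF setD11 mulr0.
rewrite andbT; have [eD|eD] := boolP (e \in D); last by case: ifP; rewrite mulr0.
have eC : e \in C.
  case/setD1P: eD => e0' eEU; apply: (@setD_EU_coords U _ _ e0').
  by rewrite (setDidPl (EU_disjoint eEU)).
by rewrite eC; case: (e \subset X); rewrite ?mulr1 ?mulr0.
Qed.

Lemma mleval_liftc c c0 X :
  mleval (liftc c c0) X = if [disjoint X & U] then mleval (affc c c0) X else 0.
Proof.
rewrite mleval_foldr_mul1BX -if_neg; congr (if _ then _ else _).
rewrite -[RHS]negbK -setI_eq0; congr (~~ _); apply/hasP/set0Pn => [[u]|[u /setIP[uX uU]]].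
  by rewrite mem_enum => uU uX; exists u; apply/setIP.
by exists u; rewrite ?mem_enum.
Qed.

Lemma liftc_support c c0 e : liftc c c0 e != 0 -> e :\: U \in EU E U.
Proof.
rewrite /liftc; have : all (mem U) (enum U) by apply/allP => u; rewrite mem_enum.
elim: (enum U) e => [|u s IH] e /=.
  by move=> _ /affc_EU eEU; rewrite (setDidPl (EU_disjoint eEU)).
case/andP => uU sU; rewrite ffunE; case: ifP => ue; last exact: IH.
rewrite oppr_eq0 => /(IH _ sU); suff -> : (e :\ u) :\: U = e :\: U by [].
by apply/setP => x; rewrite !inE; case: eqVneq => // ->; rewrite uU.
Qed.

Lemma liftc_coords c c0 e : e != set0 -> e \notin C -> liftc c c0 e = 0.
Proof.
by move=> e0 eC; apply/eqP; apply: contraNT eC => /liftc_support/setD_EU_coords; apply.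
Qed.

Lemma aff_vanish_projFU_trivial (F : vec -> Prop) a b d u (X0 : {set V}) c c0 :
  (forall z, MP E z -> dotv a z <= b) -> (forall z, F z <-> MP E z /\ dotv a z = b) ->
  dim_eq (MP E : vec -> Prop) d -> dim_eq F (d - 1) ->
  u \in U -> u \in X0 -> dotv a (vert X0) != b ->
  aff_vanish (image_proj D (FU F U)) c c0 -> c0 = 0 /\ {in D, forall e, c e = 0}.
Proof.
move=> valid faceF dimP dimF uU uX0 aX0 vanish_proj.
have liftc_vert X : dotv (liftc c c0) (vert X) + liftc c c0 set0 =
    if [disjoint X & U] then mleval (affc c c0) X else 0.
  by rewrite -mleval_vert ?mleval_liftc //; exact: liftc_coords.
have vanishF : aff_vanish F (liftc c c0) (liftc c c0 set0).
  apply: (face_aff_vanish_vert faceF valid) => X FX; rewrite liftc_vert.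
  case: ifP => // XU; rewrite mleval_affc; apply: vanish_proj.
  exists (vert X); split => //; split => // i iU.
  by rewrite vert1 (disjointFl XU iU).
have vanishMP : aff_vanish (MP E) (liftc c c0) (liftc c c0 set0).
  apply: (facet_aff_vanish faceF dimP dimF (MP_vert X0) aX0 vanishF).
  by rewrite liftc_vert; case: ifP => // X0U; rewrite (disjointFl X0U uU) in uX0.
have /ffunP affc0 : affc c c0 = 0.
  apply: (mleval_eq0 (P := fun X => [disjoint X & U])) => [e|X XU].
    by apply: contraNeq => /affc_EU/EU_disjoint.
  by rewrite -(vanishMP _ (MP_vert X)) liftc_vert XU.
split; first by have := affc0 set0; rewrite !ffunE eqxx.
move=> e eD; have := affc0 e; rewrite !ffunE eD.
by case/setD1P: eD => /negbTE ->.
Qed.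

End Lift.
End MultilinearPolytope.

Theorem lemma6p1 (R : realFieldType) (V : finType) (E : {set {set V}})
  (F : {ffun {set V} -> R} -> Prop) (U : {set V}) :
  hypergraph E -> downward_closed E ->
  is_facet (MP E) F ->
  (forall I, I \in U -> ~ V1 E F I) ->
  U != set0 ->
  EU E U = set0 \/ fulldim_in (EU E U :\ set0) (image_proj (EU E U :\ set0) (FU F U)).
Proof.
move=> hypE downE [[a [b [valid faceF]]] [d [dimP dimF]]] notV1 U0.
have [->|/set0Pn[e0 e0EU]] := eqVneq (EU E U) set0; [by left | right].
have UC := EU_coords downE e0EU U0.
have [u uU] := set0Pn _ U0.
have /existsP[X0 /andP[uX0 aX0]] :
    [exists X0 : {set V}, (u \in X0) && (dotv a (vert R E X0) != b)].
  apply: contraT; rewrite negb_exists => /forallP aX; case: (notV1 u uU).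
  by apply: (V1_vert faceF) => X uX; apply/eqP; move: (aX X); rewrite uX negbK.
apply: fulldim_in_aff_vanish => [y [z [_ ->]] e eD | c c0]; first by rewrite ffunE (negbTE eD).
exact: aff_vanish_projFU_trivial valid faceF dimP dimF uU uX0 aX0.
Qed.
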